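(* Let $G$ be a finite non-abelian group, let $m\ge 2$ be an integer, let $R$ be a Cayley subset of $G$ such that $\Gamma:=\mathrm{Cay}(G,R)$ is a GRR, $|\Gamma[R]_I|\le 1$ and $G=\langle R\setminus\Gamma[R]_I\rangle$, and let $x\in G$ satisfy one of: (1) $m\ge 3$, $x\notin\mathbf{Z}(G)$ and $o(x)>2$; (2) $m=2$ and $x^2\notin\mathbf{Z}(G)$; (3) $m=2$, $g^2\in\mathbf{Z}(G)$ for all $g\in G$, $x\notin\mathbf{Z}(G)\cup R$ and $o(x)>2$. In cases (1) or (3), let $\Theta$ be the graph with vertex set $G\times\{0,\dots,m-1\}$ (writing $g_i$ for $(g,i)$) whose edges are: $\{g_i,(rg)_i\}$ for all $i$, $g\in G$, $r\in R$; $\{g_i,g_{i+1}\}$ for all $g\in G$, $i\in\{0,\dots,m-2\}$; and $\{g_0,(xg)_{m-1}\}$ for all $g\in G$. In case (2), let $\Theta$ be the graph with vertex set $G\times\{0,1\}$ whose edges are $\{g_0,(rg)_0\}$, $\{g_1,(rg)_1\}$ for $g\in G$, $r\in R$, and $\{g_0,(xg)_1\}$ for $g\in G$. Then $\Theta$ is an $m$-GRR for $G$.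
   Context: All groups and graphs are finite and simple. A Cayley subset of $G$ is $R\subseteq G$ with $R=R^{-1}$, $1\notin R$; $\mathrm{Cay}(G,R)$ has vertex set $G$ and edges $\{g,rg\}$, $r\in R$; it is a GRR if its automorphism group is (the right regular copy of) $G$. $\Gamma[R]_I$ is the set of isolated vertices of the subgraph of $\Gamma$ induced on $R$. $\mathbf{Z}(G)$ is the center, $o(g)$ the order of $g$. An $m$-GRR for $G$ is a regular graph having a semiregular automorphism group isomorphic to $G$ with $m$ vertex-orbits and whose full automorphism group is isomorphic to $G$ (here: the group of maps $y_i\mapsto (yg)_i$). *)

From mathcomp Require Import all_boot all_fingroup all_solvable.
Set Implicit Arguments. Unset Strict Implicit. Unset Printing Implicit Defensive.
Local Open Scope group_scope.

Definition isAut (V : finType) (adj : rel V) (f : {perm V}) : Prop :=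
  forall u v, adj (f u) (f v) = adj u v.

Definition regular_graph (V : finType) (adj : rel V) : Prop :=
  exists k, forall v, #|[set w | adj v w]| = k.

(* Cayley graph Cay(G,R), G the whole group gT: edges {g, r g} *)
Definition cay (gT : finGroupType) (R : {set gT}) : rel gT :=
  fun g h => (h * g^-1) \in R.

Definition is_GRR (gT : finGroupType) (R : {set gT}) : Prop :=
  (forall a : gT, exists f : {perm gT}, isAut (cay R) f /\ forall g, f g = g * a) /\
  (forall f : {perm gT}, isAut (cay R) f -> exists a : gT, forall g, f g = g * a).

Definition isolR (gT : finGroupType) (R : {set gT}) : {set gT} :=
  [set r in R | [forall s in R, ~~ cay R r s]].

Definition rho (gT : finGroupType) (m : nat) (a : gT) (v : gT * 'I_m) : gT * 'I_m :=
  (v.1 * a, v.2).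

(* m-GRR for G with the concrete semiregular group {rho a}: the graph is
   regular and its automorphisms are exactly the maps rho a *)
Definition is_mGRR (gT : finGroupType) (m : nat) (adj : rel (gT * 'I_m)) : Prop :=
  regular_graph adj /\
  (forall a : gT, exists f : {perm (gT * 'I_m)}, isAut adj f /\ forall v, f v = rho a v) /\
  (forall f : {perm (gT * 'I_m)}, isAut adj f -> exists a : gT, forall v, f v = rho a v).

Definition thetaA (gT : finGroupType) (R : {set gT}) (x : gT) (m : nat)
  : rel (gT * 'I_m) :=
  fun u v =>
    let g := u.1 in let i := nat_of_ord u.2 in
    let h := v.1 in let j := nat_of_ord v.2 in
    [|| (i == j) && ((h * g^-1) \in R),
        (g == h) && ((j == i.+1) || (i == j.+1)),
        [&& i == 0%N, j == m.-1 & h == x * g]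
      | [&& j == 0%N, i == m.-1 & g == x * h]].

Definition thetaB (gT : finGroupType) (R : {set gT}) (x : gT) (m : nat)
  : rel (gT * 'I_m) :=
  fun u v =>
    let g := u.1 in let i := nat_of_ord u.2 in
    let h := v.1 in let j := nat_of_ord v.2 in
    [|| [&& i == j, i < 2 & (h * g^-1) \in R],
        [&& i == 0%N, j == 1%N & h == x * g]
      | [&& j == 0%N, i == 1%N & g == x * h]].

From mathcomp Require Import all_boot all_fingroup all_solvable zify.
Set Implicit Arguments. Unset Strict Implicit. Unset Printing Implicit Defensive.
Local Open Scope group_scope.

(* Every triangle of Theta lies inside a single layer G x {i} (when m = 2 in case (3) this
   uses x \notin R), while every edge {g, r g} with r in R minus the isolated vertices lies in a
   triangle.  As these r generate G, an automorphism maps layers onto layers, and since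
   Cay(G, R) is a GRR it acts as y_i |-> (y a_i)_(s i) for some a_i in G and some permutation s
   of the layers.  An edge family {g_i, g_(i+1)} is mapped to a family joining (g a_i) to
   (g a_(i+1)) for every g, which is either a family of "straight" edges (a_i = a_(i+1)) or of
   twisted edges g a_(i+1) = x g a_i, and the latter makes x central.  So all a_i agree and s
   walks through the layers by unit steps; the twisted edges {g_0, (x g)_(m-1)} and x^2 <> 1 then
   force s = id.  In case (2) the only cross edges are {g_0, (x g)_1}, and swapping the two
   layers would make x^2 central. *)

Lemma isAut_inv (V : finType) (adj : rel V) (f : {perm V}) :
  isAut adj f -> isAut adj f^-1.
Proof. by move=> autf u v; rewrite -autf !permKV. Qed.

Lemma center_twisted_translation (gT : finGroupType) (x a b : gT) :
  (forall g, g * a = x * g * b) -> x \in 'Z([set: gT]).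
Proof.
move=> twist; apply/centerP; split=> [|g _]; first by rewrite inE.
have a_eq : a = x * b by have := twist 1; rewrite mul1g mulg1.
by apply: (mulIg b); rewrite -twist a_eq mulgA.
Qed.

Lemma eq_inord n (j : 'I_n.+1) k : k <= n -> (j == inord k) = (j == k :> nat).
Proof. by move=> k_le_n; rewrite -val_eqE /= inordK. Qed.

Lemma memV_sym (gT : finGroupType) (R : {set gT}) :
  (forall r, r \in R -> r^-1 \in R) -> forall k, (k^-1 \in R) = (k \in R).
Proof. by move=> R_sym k; apply/idP/idP => /R_sym //; rewrite invgK. Qed.

Lemma mulg_fixed_eq1 (gT : finGroupType) (a b : gT) : (b * a == a) = (b == 1).
Proof. by rewrite -{2}[a]mul1g (inj_eq (mulIg a)). Qed.

Lemma unit_walk_injective_id n (S : nat -> nat) :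
  {in [pred k | k <= n] &, injective S} -> S 0 = 0 ->
  (forall k, k < n -> (S k.+1 == (S k).+1) || (S k == (S k.+1).+1)) ->
  forall k, k <= n -> S k = k.
Proof.
move=> S_inj S0 S_step; elim/ltn_ind=> -[// | k] IH lt_k_n.
have Sk : S k = k by apply: IH; lia.
case/orP: (S_step k lt_k_n) => /eqP back; first by rewrite back Sk.
case: k IH lt_k_n Sk back => [|j] IH lt_k_n Sk back; first by rewrite Sk in back.
have Sj : S j = j by apply: IH; lia.
have := S_inj j j.+2 (ltnW (ltnW lt_k_n)) lt_k_n; lia.
Qed.

Section LayeredCayleyGraphs.

Variables (gT : finGroupType) (m : nat) (R : {set gT}) (adj : rel (gT * 'I_m)).

Hypothesis adj_layer : forall g h i, adj (g, i) (h, i) = (h * g^-1 \in R).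
Hypothesis triangle_in_layer :
  forall u v w, adj u v -> adj u w -> adj v w -> u.2 = v.2.

Lemma card_layer_nbhd g i : #|[set w | adj (g, i) w & w.2 == i]| = #|R|.
Proof.
have -> : [set w | adj (g, i) w & w.2 == i] = (fun r => (r * g, i)) @: R.
  apply/setP => -[h j]; rewrite !inE /=; apply/andP/imsetP.
  - move=> [gh /eqP ji]; rewrite ji adj_layer in gh.
    by exists (h * g^-1); rewrite ?mulgKV ?ji.
  - by move=> [r Rr [-> ->]]; rewrite adj_layer mulgK.
by apply: card_imset => r s [/mulIg].
Qed.

Lemma regular_from_cross_degree k :
  (forall g i, #|[set w | adj (g, i) w & w.2 != i]| = k) -> regular_graph adj.
Proof.
move=> card_cross; exists (#|R| + k)%N => -[g i].
rewrite -(cardsID [set w | w.2 == i]) -(card_layer_nbhd g i) -(card_cross g i).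
by congr (_ + _)%N; apply: eq_card => w; rewrite !inE // andbC.
Qed.

Hypothesis R_generates : <<R :\: isolR R>> = [set: gT].
Hypothesis R_GRR : is_GRR R.

Lemma aut_preserves_layers f : isAut adj f -> forall g h i, (f (g, i)).2 = (f (h, i)).2.
Proof.
move=> autf.
have edge_layer r g i : r \in R :\: isolR R -> (f (r * g, i)).2 = (f (g, i)).2.
  rewrite !inE => /andP [+ Rr]; rewrite Rr negb_forall_in => /exists_inP [s Rs /negPn rs].
  apply/esym/(triangle_in_layer (w := f (s * g, i))); rewrite autf adj_layer //.
  - by rewrite mulgK.
  - by rewrite mulgK.
  - by rewrite invMg mulgA mulgK; exact: rs.
pose H := [set k | [forall g, forall i, (f (k * g, i)).2 == (f (g, i)).2]].
have H_group : group_set H.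
  apply/group_setP; split=> [|k l]; first by rewrite inE; apply/'forall_forallP => g i; rewrite mul1g.
  rewrite !inE => /'forall_forallP Hk /'forall_forallP Hl.
  by apply/'forall_forallP => g i; rewrite -mulgA (eqP (Hk _ _)) (eqP (Hl _ _)).
have H_all k : k \in H.
  have : <<R :\: isolR R>> \subset Group H_group.
    rewrite gen_subG; apply/subsetP => r Rr.
    by rewrite /= inE; apply/'forall_forallP => g i; rewrite edge_layer.
  by rewrite R_generates => /subsetP; apply; rewrite inE.
move=> g h i; have /[!inE] /'forall_forallP /(_ h i) /eqP := H_all (g * h^-1).
by rewrite mulgKV.
Qed.

Lemma aut_layerwise_translation f : isAut adj f ->
  exists a : 'I_m -> gT, exists s : 'I_m -> 'I_m,
    injective s /\ forall g i, f (g, i) = (g * a i, s i).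
Proof.
move=> autf; have layer_f := aut_preserves_layers autf.
exists (fun i => (f (1, i)).1), (fun i => (f (1, i)).2); split=> [i j /= sij | g i /=].
  have := aut_preserves_layers (isAut_inv autf) (f (1, i)).1 (f (1, j)).1 (f (1, i)).2.
  by rewrite {2}sij -!surjective_pairing !permK.
have f_layer k : f (k, i) = ((f (k, i)).1, (f (1, i)).2).
  by rewrite (layer_f 1 k) -surjective_pairing.
pose phi k := (f (k, i)).1.
have phi_inj : injective phi.
  move=> k l phi_kl; suff /perm_inj [] : f (k, i) = f (l, i) by [].
  by rewrite f_layer [f (l, i)]f_layer -/(phi k) phi_kl.
have [a phi_a] : exists a, forall k, perm phi_inj k = k * a.
  apply: R_GRR.2 => u v; rewrite !permE /cay /phi -(adj_layer u v i) -autf.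
  by rewrite [in RHS]f_layer [f (v, i) in RHS]f_layer adj_layer.
have phi_g : (f (g, i)).1 = g * a by rewrite -phi_a permE.
have phi_1 : (f (1, i)).1 = a by rewrite -[a]mul1g -phi_a permE.
by rewrite f_layer phi_g phi_1.
Qed.

Hypothesis adj_rho : forall a u v, adj (rho a u) (rho a v) = adj u v.

Lemma rho_aut a : exists f : {perm gT * 'I_m}, isAut adj f /\ forall v, f v = rho a v.
Proof.
have rho_inj : injective (@rho gT m a) by move=> [g i] [h j] [/mulIg -> ->].
by exists (perm rho_inj); split=> [u v | v]; rewrite !permE ?adj_rho.
Qed.

Definition rigid_layers := forall (a : 'I_m -> gT) (s : 'I_m -> 'I_m), injective s ->
  (forall g h i j, adj (g * a i, s i) (h * a j, s j) = adj (g, i) (h, j)) ->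
  exists b, forall i, a i = b /\ s i = i.

Lemma rigid_layers_mGRR : regular_graph adj -> rigid_layers -> is_mGRR adj.
Proof.
move=> adj_reg rigid; split=> //; split=> [|f autf]; first exact: rho_aut.
have [a [s [s_inj f_eq]]] := aut_layerwise_translation autf.
have [|b ab] := rigid a s s_inj; first by move=> g h i j; rewrite -!f_eq.
by exists b => -[g i]; rewrite f_eq /rho /=; case: (ab i) => -> ->.
Qed.

End LayeredCayleyGraphs.

Section ThetaA.

Variables (gT : finGroupType) (R : {set gT}) (x : gT) (n : nat).
Hypothesis n_gt0 : 0 < n.
Local Notation theta := (@thetaA gT R x n.+1).

Lemma thetaA_layer g h i : theta (g, i) (h, i) = (h * g^-1 \in R).
Proof.
rewrite /thetaA /= eqxx ltn_eqF //= andbF.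
by case: (i =P 0 :> nat) => [-> | _] /=; rewrite ?orbF // [0 == n]eq_sym eqn0Ngt n_gt0 !orbF.
Qed.

Lemma thetaA_rho a u v : theta (rho a u) (rho a v) = theta u v.
Proof.
case: u v => [g i] [h j]; rewrite /thetaA /rho /=.
by rewrite invMg mulgA mulgK !mulgA !(inj_eq (mulIg a)).
Qed.

Lemma thetaA_cross p q (s t : 'I_n.+1) : theta (p, s) (q, t) -> s != t ->
  [\/ p = q /\ ((t == s.+1 :> nat) || (s == t.+1 :> nat)),
      [/\ s = 0 :> nat, t = n :> nat & q = x * p]
    | [/\ t = 0 :> nat, s = n :> nat & p = x * q]].
Proof.
move=> + st; rewrite /thetaA /= => /or4P[/andP[/eqP/val_inj s_eq _] | /andP[/eqP-> adj_st] |
  /and3P[/eqP-> /eqP-> /eqP->] | /and3P[/eqP-> /eqP-> /eqP->]].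
- by rewrite s_eq eqxx in st.
- by apply: Or31.
- by apply: Or32.
- by apply: Or33.
Qed.

Lemma thetaA_cross_nbhd g i : [set w | theta (g, i) w & w.2 != i] =
  [set if i < n then (g, inord i.+1) else (x^-1 * g, ord0);
       if 0 < i then (g, inord i.-1) else (x * g, ord_max)].
Proof.
have i_le_n : i <= n := leq_ord i.
apply/setP => -[h j]; rewrite !inE; apply/idP/idP.
  rewrite eq_sym => /andP[gh ij]; have j_le_n : j <= n := leq_ord j.
  case: (thetaA_cross gh ij) => [[<- /orP[] /eqP j_eq] | [i0 jn ->] | [j0 i_n ->]].
  - by rewrite ifT ?xpair_eqE ?eq_inord ?j_eq ?eqxx //; lia.
  - by rewrite (ifT _ _ (_ : 0 < i)) ?xpair_eqE ?eq_inord ?j_eq ?eqxx ?orbT //; lia.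
  - by rewrite i0 /= xpair_eqE eqxx -val_eqE /= jn eqxx orbT.
  - by rewrite i_n ltnn mulKg xpair_eqE eqxx -val_eqE /= j0.
case/orP=> /eqP ->; rewrite /thetaA -val_eqE /=.
  case: ltnP => [i_lt_n | n_le_i] /=; rewrite ?inordK //.
    by rewrite !eqxx orbT gtn_eqF.
  have i_eq_n : i = n :> nat by apply/eqP; rewrite eqn_leq i_le_n n_le_i.
  by rewrite i_eq_n mulKVg !eqxx !orbT eq_sym -lt0n.
case: posnP => [i0 | i_gt0] /=; rewrite ?inordK ?prednK //; try lia.
  by rewrite i0 !eqxx /= !orbT -lt0n.
by rewrite !eqxx /= !orbT ltn_eqF ?ltn_predL.
Qed.

Lemma thetaA_regular : x != 1 -> regular_graph theta.
Proof.
move=> x_neq1; apply: (@regular_from_cross_degree _ _ R _ thetaA_layer 2) => g i.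
rewrite thetaA_cross_nbhd cards2; have i_le_n := leq_ord i.
case: ltnP => [i_lt_n | n_le_i]; case: posnP => [i0 | i_gt0] //=.
all: rewrite xpair_eqE negb_and -val_eqE /= ?inordK; try lia.
all: by rewrite ?[g == _]eq_sym mulg_fixed_eq1 ?eq_invg1 x_neq1.
Qed.

Lemma thetaA_cross_translation b c (s t : 'I_n.+1) :
  x != 1 -> x \notin 'Z([set: gT]) -> s != t ->
  (forall g, theta (g * b, s) (g * c, t)) ->
  b = c /\ ((t == s.+1 :> nat) || (s == t.+1 :> nat)).
Proof.
move=> x_neq1 xZ st.
have x_moves k : k = x * k -> False.
  by move/esym/eqP; rewrite mulg_fixed_eq1 (negbTE x_neq1).
have [<- | bc] := eqVneq b c => edge.
  split=> //; case: (thetaA_cross (edge 1) st) => [[_ //] | [_ _] | [_ _]];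
  by rewrite !mul1g => /x_moves.
exfalso; move/negP: xZ; apply.
have [[s0 tn] | [t0 sn]] : (s = 0 :> nat /\ t = n :> nat) \/ (t = 0 :> nat /\ s = n :> nat).
  case: (thetaA_cross (edge 1) st) => [[/mulgI bc' _] | [-> -> _] | [-> -> _]]; by [left | right | rewrite bc' eqxx in bc].
- apply: (@center_twisted_translation _ x c b) => g.
  case: (thetaA_cross (edge g) st) => [[/mulgI bc' _] | [_ _ ->] | [t0 _ _]];
    [by rewrite bc' eqxx in bc | by rewrite mulgA | lia].
- apply: (@center_twisted_translation _ x b c) => g.
  case: (thetaA_cross (edge g) st) => [[/mulgI bc' _] | [s0 _ _] | [_ _ ->]];
    [by rewrite bc' eqxx in bc | lia | by rewrite mulgA].
Qed.

Lemma thetaA_rigid : x != 1 -> x ^+ 2 != 1 -> x \notin 'Z([set: gT]) -> rigid_layers theta.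
Proof.
move=> x_neq1 x2_neq1 xZ a s s_inj aut.
pose A k := a (inord k); pose S k : nat := s (inord k).
have S_inj : {in [pred k | k <= n] &, injective S}.
  move=> k l /[!inE] k_le l_le /val_inj/s_inj/(congr1 val).
  by rewrite /= !inordK.
have step k : k < n -> A k = A k.+1 /\ ((S k.+1 == (S k).+1) || (S k == (S k.+1).+1)).
  move=> lt_k_n; apply: thetaA_cross_translation => //.
    by apply/eqP => /(congr1 val) /S_inj; rewrite !inE; lia.
  by move=> g; rewrite aut /thetaA /= !inordK ?eqxx ?orbT //; lia.
have A_const k : k <= n -> A k = A 0.
  by elim: k => [// | j IHj] lt_j_n; rewrite -IHj ?(ltnW lt_j_n) //; case: (step j lt_j_n).
have wrap : theta (A 0, s (inord 0)) (x * A 0, s (inord n)).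
  by rewrite -{2}(A_const n) // -[A 0]mul1g aut /thetaA /= !inordK // mulg1 !eqxx /= !orbT.
have S0 : S 0 = 0.
  have S0n : s (inord 0) != s (inord n) by rewrite (inj_eq s_inj) -val_eqE /= !inordK //; lia.
  case: (thetaA_cross wrap S0n) => [[/esym/eqP] | [] // | [_ _]].
    by rewrite mulg_fixed_eq1 (negbTE x_neq1).
  by rewrite mulgA -(expgS x 1) => /esym/eqP; rewrite mulg_fixed_eq1 (negbTE x2_neq1).
have S_id := unit_walk_injective_id S_inj S0 (fun k lt_k_n => (step k lt_k_n).2).
exists (A 0) => i; rewrite -(A_const i (leq_ord i)) /A inord_val; split=> //.
by apply: val_inj; have := S_id i (leq_ord i); rewrite /S inord_val.
Qed.

Hypothesis R_sym : forall r, r \in R -> r^-1 \in R.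
Hypothesis R1 : 1 \notin R.
Hypothesis x_notin_R : n = 1%N -> x \notin R.

Lemma thetaA_sym u v : theta u v = theta v u.
Proof.
case: u v => [g i] [h j]; rewrite /thetaA /= -(memV_sym R_sym) invMg invgK.
rewrite (eq_sym (j : nat) i) (eq_sym h g) (orbC (i == j.+1 :> nat)).
by congr (_ || (_ || _)); apply: orbC.
Qed.

Lemma thetaA_cross_nbrs_nonadj p q y (s t : 'I_n.+1) :
  theta (p, s) (q, t) -> theta (p, s) (y, t) -> s != t -> y * q^-1 \notin R.
Proof.
(* The two neighbours differ by x or x^-1, and only when m = 2 can they share a layer. *)
move=> pq py st.
have xR : n = 1%N -> (x \notin R) && (x^-1 \notin R) by move/x_notin_R; rewrite (memV_sym R_sym) andbb.
case: (thetaA_cross pq st) => [[? adj_st] | [s0 tn ?] | [t0 sn ?]];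
  case: (thetaA_cross py st) => [[? adj_st'] | [s0' tn' ?] | [t0' sn' /esym/(canRL (mulKg x)) ?]];
  clear pq py; subst; rewrite ?invMg ?mulgA ?mulgV ?mulVg ?mulgK ?mul1g ?mulgV //; try lia.
all: by case/andP: (xR ltac:(lia)).
Qed.

Lemma thetaA_no_triangle_across_three_layers p q y (s t r : 'I_n.+1) : x != 1 ->
  theta (p, s) (q, t) -> theta (p, s) (y, r) -> theta (q, t) (y, r) ->
  s != t -> s != r -> t != r -> False.
Proof.
(* Three pairwise adjacent layers force m = 3, and going around the triangle multiplies by x. *)
move=> x_neq1 pq py qy st sr tr.
case: (thetaA_cross pq st) => [[? adj_st] | [s0 tn ?] | [t0 sn ?]];
  case: (thetaA_cross py sr) => [[? adj_sr] | [s0' rn ?] | [r0 sn' ?]];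
  case: (thetaA_cross qy tr) => [[? adj_tr] | [t0' rn' ?] | [r0' tn' ?]];
  clear pq py qy; subst; try lia.
all: by match goal with E : _ = _ |- _ =>
  move/eqP: E; rewrite ?[_ == x * _]eq_sym mulg_fixed_eq1 (negbTE x_neq1) end.
Qed.

Lemma thetaA_triangle : x != 1 ->
  forall u v w, theta u v -> theta u w -> theta v w -> u.2 = v.2.
Proof.
move=> x_neq1 [p s] [q t] [y r] pq py qy /=; apply/eqP/negPn/negP => st.
have [rs | rs] := eqVneq r s.
  rewrite rs in py qy; rewrite thetaA_sym in pq.
  by rewrite thetaA_layer (negbTE (thetaA_cross_nbrs_nonadj pq qy _)) // eq_sym in py.
have [rt | rt] := eqVneq r t.
  rewrite rt in py qy.
  by rewrite thetaA_layer (negbTE (thetaA_cross_nbrs_nonadj pq py st)) in qy.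
by apply: (thetaA_no_triangle_across_three_layers x_neq1 pq py qy); rewrite // eq_sym.
Qed.

End ThetaA.

Section ThetaB.

Variables (gT : finGroupType) (R : {set gT}) (x : gT).
Local Notation theta := (@thetaB gT R x 2).

Lemma thetaB_layer g h i : theta (g, i) (h, i) = (h * g^-1 \in R).
Proof. by case: i => -[|[|//]] i_lt; rewrite /thetaB /= ?orbF. Qed.

Lemma thetaB_rho a u v : theta (rho a u) (rho a v) = theta u v.
Proof.
case: u v => [g i] [h j]; rewrite /thetaB /rho /=.
by rewrite invMg mulgA mulgK !mulgA !(inj_eq (mulIg a)).
Qed.

Lemma thetaB_cross p q (s t : 'I_2) : theta (p, s) (q, t) -> s != t ->
  [/\ s = 0 :> nat, t = 1%N :> nat & q = x * p] \/ [/\ t = 0 :> nat, s = 1%N :> nat & p = x * q].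
Proof.
move=> + st; rewrite /thetaB /= => /or3P[/and3P[/eqP/val_inj s_eq _ _] |
  /and3P[/eqP-> /eqP-> /eqP->] | /and3P[/eqP-> /eqP-> /eqP->]].
- by rewrite s_eq eqxx in st.
- by left.
- by right.
Qed.

Lemma thetaB_triangle : 1 \notin R ->
  forall u v w, theta u v -> theta u w -> theta v w -> u.2 = v.2.
Proof.
move=> R1 [p s] [q t] [y r] pq py qy /=; apply/eqP/negPn/negP => st.
have no_loop k i : theta (k, i) (k, i) = false by rewrite thetaB_layer mulgV (negbTE R1).
have [/val_inj rs | /val_inj rt] : r = s :> nat \/ r = t :> nat.
  have st' : (s : nat) != t := st.
  by have := ltn_ord r; have := ltn_ord s; have := ltn_ord t; lia.
- subst r; have ts : t != s by rewrite eq_sym.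
  suff p_y : p = y by rewrite p_y no_loop in py.
  case: (thetaB_cross pq st) => -[? ? ?]; case: (thetaB_cross qy ts) => -[? ? ?];
    subst; try lia; by apply: (mulgI x).
- subst r; suff q_y : q = y by rewrite q_y no_loop in qy.
  case: (thetaB_cross pq st) => -[? ? ?]; case: (thetaB_cross py st) => -[? ? ?];
    subst; try lia; by apply: (mulgI x).
Qed.

Lemma thetaB_regular : regular_graph theta.
Proof.
apply: (@regular_from_cross_degree _ _ R _ thetaB_layer 1) => g i; apply/eqP/cards1P.
case: i => -[|[|//]] i_lt; [exists (x * g, ord_max) | exists (x^-1 * g, ord0)];
  apply/setP => -[h [[|[|//]] j_lt]]; rewrite !inE xpair_eqE -val_eqE /thetaB /= ?andbT ?andbF ?orbF //.
by rewrite eq_sym (canF_eq (mulKg x)).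
Qed.

Lemma thetaB_rigid : x ^+ 2 \notin 'Z([set: gT]) -> rigid_layers theta.
Proof.
move=> x2Z a s s_inj aut.
have s01 : s ord0 != s ord_max by rewrite (inj_eq s_inj).
have edge g : theta (g * a ord0, s ord0) (x * g * a ord_max, s ord_max).
  by rewrite aut /thetaB /= !eqxx.
case: (thetaB_cross (edge 1) s01) => -[s0 s1 e].
  have a_eq : a ord_max = a ord0 by move: e; rewrite !mul1g mulg1 => /mulgI.
  exists (a ord0) => i; have [-> | ->] : i = ord0 \/ i = ord_max.
  - by case: i => -[|[|//]] ?; [left | right]; apply: val_inj.
  - by split; last apply: val_inj.
  - by split; last apply: val_inj.
exfalso; move/negP: x2Z; apply.
apply: (@center_twisted_translation _ (x ^+ 2) (a ord0) (a ord_max)) => g.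
case: (thetaB_cross (edge g) s01) => -[? ? e']; first lia.
by rewrite e' !mulgA -(expgS x 1).
Qed.

End ThetaB.

Lemma order_gt2_neq1 (gT : finGroupType) (x : gT) : 2 < #[x] -> x != 1 /\ x ^+ 2 != 1.
Proof.
move=> ox; split; first by apply: contraTneq ox => ->; rewrite order1.
by apply: contraTneq ox => x2; rewrite -leqNgt dvdn_leq // order_dvdn x2.
Qed.

Theorem lemma3p7 (gT : finGroupType) (m : nat) (R : {set gT}) (x : gT) :
  ~~ abelian [set: gT] ->
  (2 <= m)%N ->
  (forall r, r \in R -> r^-1 \in R) ->
  1 \notin R ->
  is_GRR R ->
  (#|isolR R| <= 1)%N ->
  <<R :\: isolR R>> = [set: gT] ->
  (* cases (1) and (3) *)
  ( ([/\ (3 <= m)%N, x \notin 'Z([set: gT]) & (2 < #[x])%N] \/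
     [/\ m = 2%N, (forall g : gT, g ^+ 2 \in 'Z([set: gT])),
         x \notin ('Z([set: gT]) :|: R) & (2 < #[x])%N]) ->
    @is_mGRR gT m (@thetaA gT R x m) ) /\
  (* case (2) *)
  ( (m = 2%N /\ x ^+ 2 \notin 'Z([set: gT])) ->
    @is_mGRR gT m (@thetaB gT R x m) ).
Proof.
(* Neither the non-commutativity of G, nor the bound on the isolated vertices, nor the
   centrality of squares in case (3) is needed. *)
move=> _ m_ge2 R_sym R1 R_GRR _ R_gen; split=> [cases13 | [-> x2Z]].
  case: m m_ge2 cases13 => [// | n] n_gt0 cases13.
  have [xZ ox xR] : [/\ x \notin 'Z([set: gT]), 2 < #[x] & n = 1%N -> x \notin R].
    case: cases13 => [[m3 xZ ox] | [[n1] _ /[!inE] /norP[xZ xR] ox]]; split=> // n1'.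
    by rewrite n1' in m3.
  have [x_neq1 x2_neq1] := order_gt2_neq1 ox.
  apply: (rigid_layers_mGRR (thetaA_layer R x n_gt0) (thetaA_triangle n_gt0 R_sym R1 xR x_neq1)
    R_gen R_GRR (@thetaA_rho gT R x n) (thetaA_regular R n_gt0 x_neq1)).
  exact: thetaA_rigid.
apply: (rigid_layers_mGRR (@thetaB_layer gT R x) (thetaB_triangle R1) R_gen R_GRR
  (@thetaB_rho gT R x) (@thetaB_regular gT R x)).
exact: thetaB_rigid.
Qed.
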